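(* For each positive integer $n\ge 4$, there exists a family of $n$ digraphs of order $4^n$, each strongly connected and non symmetric, which are pairwise integral strongly quasi-cospectral.
   Context: A sidigraph is a digraph (no loops, at most one arc from $u$ to $v$) with a sign $\pm1$ on each arc; its adjacency matrix has entry $\sigma(v_i,v_j)$ if there is an arc from $v_i$ to $v_j$ and $0$ otherwise, and its spectrum is the multiset of eigenvalues of this matrix. An (unsigned) digraph is identified with the sidigraph having all arcs positive. A sidigraph on a digraph $D$ is a sidigraph whose underlying digraph is $D$. Two (si)digraphs are cospectral if they have the same spectrum. The sign of a cycle is the product of its arc signs; a sidigraph is cycle balanced if every directed cycle is positive. A digraph is symmetric if whenever $(u,v)$ is an arc so is $(v,u)$; it is strongly connected in the usual sense. Two digraphs $D_1,D_2$ are integral strongly quasi-cospectral if $D_1$ and $D_2$ are cospectral with all eigenvalues integers, and there exist non cycle balanced sidigraphs $S_1$ on $D_1$ and $S_2$ on $D_2$ that are cospectral with all eigenvalues integers. *)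

From HB Require Import structures.
From mathcomp Require Import all_boot all_order all_algebra all_fingroup all_field.
Set Implicit Arguments. Unset Strict Implicit. Unset Printing Implicit Defensive.
Import Order.TTheory GRing.Theory Num.Theory.
Local Open Scope ring_scope.

(* A digraph on the vertex set 'I_N: an arc relation with no loops
   (at most one arc u -> v is automatic for a relation). *)
Definition is_digraph N (D : rel 'I_N) : Prop := irreflexive D.

(* A signature: sg u v = true means the arc (u,v) is negative.
   Only values on arcs of D matter. *)
Definition signing N := 'I_N -> 'I_N -> bool.

Definition sgval (b : bool) : algC := (-1) ^+ b.

Definition sadj N (D : rel 'I_N) (sg : signing N) : 'M[algC]_N :=
  \matrix_(i, j) (if D i j then sgval (sg i j) else 0).

Definition adj N (D : rel 'I_N) : 'M[algC]_N := sadj D (fun _ _ => false).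

Definition spectrum N (A : 'M[algC]_N) : algC -> nat :=
  fun z => mup z (char_poly A).

Definition cospectral N M (A : 'M[algC]_N) (B : 'M[algC]_M) : Prop :=
  forall z, spectrum A z = spectrum B z.

Definition integral_spectrum N (A : 'M[algC]_N) : Prop :=
  forall z, root (char_poly A) z -> z \in Num.int.

Definition directed_cycle N (D : rel 'I_N) (c : seq 'I_N) : bool :=
  [&& c != [::], uniq c & path.cycle D c].

Definition cycle_sign N (sg : signing N) (c : seq 'I_N) : algC :=
  \prod_(p <- zip c (rot 1 c)) sgval (sg p.1 p.2).

Definition cycle_balanced N (D : rel 'I_N) (sg : signing N) : Prop :=
  forall c, directed_cycle D c -> cycle_sign sg c = 1.

Definition strongly_connected N (D : rel 'I_N) : Prop :=
  forall u v, connect D u v.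

Definition symmetric_digraph N (D : rel 'I_N) : Prop :=
  forall u v, D u v -> D v u.

Definition isomorphic N (D1 D2 : rel 'I_N) : Prop :=
  exists f : {perm 'I_N}, forall u v, D1 u v = D2 (f u) (f v).

Definition integral_strongly_quasi_cospectral N (D1 D2 : rel 'I_N) : Prop :=
  [/\ cospectral (adj D1) (adj D2),
      integral_spectrum (adj D1),
      integral_spectrum (adj D2) &
      exists (s1 s2 : signing N),
        [/\ ~ cycle_balanced D1 s1, ~ cycle_balanced D2 s2,
            cospectral (sadj D1 s1) (sadj D2 s2),
            integral_spectrum (sadj D1 s1) & integral_spectrum (sadj D2 s2)]].

From Pilot Require Import Defs.
From HB Require Import structures.
From mathcomp Require Import all_boot all_order all_algebra all_fingroup all_field.
From mathcomp Require Import ring zify.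
Set Implicit Arguments. Unset Strict Implicit. Unset Printing Implicit Defensive.
Import Order.TTheory GRing.Theory Num.Theory.
Local Open Scope ring_scope.

(* Each digraph of the family is a labelled digraph: every vertex v carries a
   label in {0, 1, 2, 3} and an out-set of labels, and u -> v iff the label of v
   lies in the out-set of u.  Its adjacency matrix therefore factors as S R
   through the four labels, and Sylvester's identity
   det (X - S R) = X ^ (N - 4) det (X - R S) reduces its spectrum to that of the
   4 x 4 matrix R S, which counts vertices by label and out-set; the same holds
   for the signing that makes the arcs into label 3 negative, with R replaced by
   E R for E = diag (1, 1, 1, -1).  The parameter i moves vertices between
   labels 0 and 1 without changing R S or E R S, but it changes the number of
   arcs.  Finally R S = P Q and E R S = (E P) Q with (Q P)^2 = (4m)^2 and
   (Q E P)^2 = 0, so every eigenvalue lies in {0, 4m, -4m}.  With m = 4^(n-2)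
   and i < n this gives n pairwise non-isomorphic digraphs on 16 m = 4^n
   vertices. *)

Section Sylvester.
Variables (F : fieldType) (N k : nat) (S : 'M[F]_(N, k)) (R : 'M[F]_(k, N)).

(* Two block-triangular factorizations of [[X, S], [R, 1]]. *)
Lemma char_poly_mulmxC_Xn :
  'X ^+ k * char_poly (S *m R) = 'X ^+ N * char_poly (R *m S).
Proof.
set Sp := map_mx polyC S; set Rp := map_mx polyC R.
pose L := block_mx (1%:M : 'M[{poly F}]_N) 0 (- Rp) ('X%:M : 'M_k).
pose M := block_mx ('X%:M : 'M[{poly F}]_N) Sp Rp (1%:M : 'M_k).
pose U := block_mx (1%:M : 'M[{poly F}]_N) 0 (- Rp) (1%:M : 'M_k).
have detL : \det L = 'X ^+ k by rewrite det_lblock det1 det_scalar mul1r.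
have detU : \det U = 1 by rewrite det_lblock !det1 mul1r.
have LM : L *m M = block_mx ('X%:M) Sp 0 (char_poly_mx (R *m S)).
  rewrite mulmx_block !mul0mx !addr0 !mul1mx mul_mx_scalar mul_scalar_mx.
  by rewrite scalerN addNr mulmx1 /char_poly_mx map_mxM mulNmx addrC.
have MU : M *m U = block_mx (char_poly_mx (S *m R)) Sp 0 1.
  rewrite mulmx_block !mulmx0 !mulmx1 !mul1mx add0r addrN.
  by rewrite add0r /char_poly_mx map_mxM mulmxN.
have detM : \det M = char_poly (S *m R).
  by rewrite -[\det M]mulr1 -detU -det_mulmx MU det_ublock det1 mulr1.
by rewrite -detL -detM -det_mulmx LM det_ublock det_scalar.
Qed.

Lemma char_poly_mulmxC : (k <= N)%N ->
  char_poly (S *m R) = 'X ^+ (N - k) * char_poly (R *m S).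
Proof.
move=> le_kN; have /mulfI : ('X ^+ k : {poly F}) != 0 by rewrite expf_neq0 ?polyX_eq0.
by apply; rewrite char_poly_mulmxC_Xn mulrA -exprD subnKC.
Qed.

End Sylvester.

Lemma cospectral_mulmxC N k (S1 S2 : 'M[algC]_(N, k)) (R1 R2 : 'M[algC]_(k, N)) :
  (k <= N)%N -> R1 *m S1 = R2 *m S2 -> cospectral (S1 *m R1) (S2 *m R2).
Proof. by move=> le_kN RS12 z; rewrite /spectrum !(char_poly_mulmxC _ _ le_kN) RS12. Qed.

Lemma integral_spectrum_mulmxC N k (S : 'M[algC]_(N, k)) (R : 'M[algC]_(k, N)) :
  (k <= N)%N -> integral_spectrum (R *m S) -> integral_spectrum (S *m R).
Proof.
move=> le_kN intRS z; rewrite (char_poly_mulmxC _ _ le_kN) rootM => /orP[|/intRS //].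
by rewrite /root hornerXn expf_eq0 => /andP[_ /eqP->]; rewrite rpred0.
Qed.

Lemma root_char_poly_cubic (F : fieldType) n (A : 'M[F]_n) (b z : F) :
  A *m A *m A = b ^+ 2 *: A -> root (char_poly A) z ->
  [|| z == 0, z == b | z == - b].
Proof.
move=> A3; rewrite -eigenvalue_root_char => /eigenvalueP[v vA nz_v].
have vA' c : (c *: v) *m A = (c * z) *: v by rewrite -scalemxAl vA scalerA.
have : (z ^+ 3 - b ^+ 2 * z) *: v = 0.
  have := congr1 (mulmx v) A3; rewrite !mulmxA vA !vA' -scalemxAr vA scalerA.
  by rewrite -expr2 -exprSr scalerBl => ->; rewrite subrr.
move/eqP; rewrite scaler_eq0 (negbTE nz_v) orbF.
have -> : z ^+ 3 - b ^+ 2 * z = z * ((z - b) * (z + b)) by ring.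
by rewrite !mulf_eq0 subr_eq0 addr_eq0.
Qed.

Lemma mulmx_cubic k l (P : 'M[algC]_(k, l)) (Q : 'M[algC]_(l, k)) (b : algC) :
  Q *m P *m (Q *m P) = (b ^+ 2)%:M -> P *m Q *m (P *m Q) *m (P *m Q) = b ^+ 2 *: (P *m Q).
Proof.
move=> QP2; have -> : P *m Q *m (P *m Q) *m (P *m Q) = P *m (Q *m P *m (Q *m P)) *m Q.
  by rewrite !mulmxA.
by rewrite QP2 mul_mx_scalar -scalemxAl.
Qed.

Lemma integral_spectrum_factor k l (P : 'M[algC]_(k, l)) (Q : 'M[algC]_(l, k)) (b : algC) :
  b \in Num.int -> Q *m P *m (Q *m P) = (b ^+ 2)%:M -> integral_spectrum (P *m Q).
Proof.
move=> bZ /mulmx_cubic PQ3 z /(root_char_poly_cubic PQ3).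
by case/or3P => /eqP->; rewrite ?rpred0 ?rpredN.
Qed.

Section LabelledDigraph.
Variables (N k : nat) (lab : 'I_N -> 'I_k) (out : 'I_N -> pred 'I_k).

Definition lab_digraph : rel 'I_N := fun u v => out u (lab v).
Definition out_mx : 'M[algC]_(N, k) := \matrix_(u, t) (out u t)%:R.
Definition lab_mx : 'M[algC]_(k, N) := \matrix_(t, v) (lab v == t)%:R.
Definition sign_mx (neg : pred 'I_k) : 'M[algC]_k := diag_mx (\row_t Defs.sgval (neg t)).

Lemma sadj_lab_digraph (neg : pred 'I_k) :
  sadj lab_digraph (fun _ v => neg (lab v)) = out_mx *m (sign_mx neg *m lab_mx).
Proof.
apply/matrixP => u v; rewrite !mxE (bigD1 (lab v)) //= big1 ?addr0 => [|t /negbTE nlab_t].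
  rewrite mul_diag_mx !mxE eqxx mulr1 /lab_digraph.
  by case: (out u _); rewrite ?mul1r ?mul0r.
by rewrite mul_diag_mx !mxE eq_sym nlab_t !mulr0.
Qed.

Lemma adj_lab_digraph : adj lab_digraph = out_mx *m lab_mx.
Proof.
rewrite [LHS](sadj_lab_digraph xpred0) /sign_mx.
suff -> : \row_(t < k) Defs.sgval (xpred0 t) = const_mx 1 by rewrite diag_const_mx mul1mx.
by apply/rowP => t; rewrite !mxE.
Qed.

Lemma lab_mx_out_mxE t t' :
  (lab_mx *m out_mx) t t' = (\sum_v ((lab v == t) && out v t'))%:R.
Proof. by rewrite !mxE natr_sum; apply: eq_bigr => v _; rewrite !mxE -natrM mulnb. Qed.

End LabelledDigraph.

Definition arcs N (D : rel 'I_N) : nat := \sum_u \sum_v D u v.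

Lemma isomorphic_arcs N (D1 D2 : rel 'I_N) : isomorphic D1 D2 -> arcs D1 = arcs D2.
Proof.
move=> [f Df]; rewrite /arcs [RHS](reindex_inj (@perm_inj _ f)).
apply: eq_bigr => u _; rewrite [RHS](reindex_inj (@perm_inj _ f)).
by apply: eq_bigr => v _; rewrite Df.
Qed.

Lemma big_nat_split_const (a b c : nat) (F : nat -> nat) (K : nat) :
  (a <= b <= c)%N -> (forall v, (a <= v < b)%N -> F v = K) ->
  (\sum_(a <= v < c) F v = (b - a) * K + \sum_(b <= v < c) F v)%N.
Proof.
move=> /andP[le_ab le_bc] FK; rewrite (big_cat_nat le_ab le_bc) /=.
by rewrite (eq_big_nat _ _ FK) sum_nat_const_nat.
Qed.

Local Close Scope ring_scope.

Ltac case_ifs := repeat match goal with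
  | |- context [if ?b then _ else _] => case: (boolP b) => ? end.

Section Family.
Variables (m N : nat).
Hypotheses (m_gt0 : 0 < m) (N16m : N = 16 * m).

Definition label (i v : nat) : nat :=
  if v < 4 * m then (if v < i then 0 else 1)
  else if v < 8 * m then (if v < 8 * m - i then 0 else 1)
  else if v < 12 * m then (if v < 12 * m - i then 0 else 1)
  else if v < 14 * m then 2 else 3.

Definition outset (v : nat) : seq nat :=
  if v < 4 * m then [:: 2; 3] else if v < 8 * m then [:: 2]
  else if v < 12 * m then [:: 3]
  else if (v == 12 * m) || (v == 14 * m) then [:: 0] else [:: 1].

Ltac block a b K := rewrite (@big_nat_split_const a b _ _ K);
  [| lia | by move=> v /andP[? ?]; rewrite /label /outset; case_ifs => //; lia].

Lemma label_lt4 i v : label i v < 4.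
Proof. by rewrite /label; case_ifs. Qed.

Lemma sum_vertices i (phi : nat -> seq nat -> nat) : i <= 4 * m ->
  \sum_(v < N) phi (label i v) (outset v) =
  i * phi 0 [:: 2; 3] + (4 * m - i) * phi 1 [:: 2; 3]
  + (4 * m - i) * phi 0 [:: 2] + i * phi 1 [:: 2]
  + (4 * m - i) * phi 0 [:: 3] + i * phi 1 [:: 3]
  + phi 2 [:: 0] + (2 * m - 1) * phi 2 [:: 1]
  + phi 3 [:: 0] + (2 * m - 1) * phi 3 [:: 1].
Proof.
move=> le_i4m; rewrite -(big_mkord xpredT (fun v => phi (label i v) (outset v))) N16m.
block 0 i (phi 0 [:: 2; 3]); block i (4 * m) (phi 1 [:: 2; 3]).
block (4 * m) (8 * m - i) (phi 0 [:: 2]); block (8 * m - i) (8 * m) (phi 1 [:: 2]).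
block (8 * m) (12 * m - i) (phi 0 [:: 3]); block (12 * m - i) (12 * m) (phi 1 [:: 3]).
block (12 * m) (12 * m).+1 (phi 2 [:: 0]); block (12 * m).+1 (14 * m) (phi 2 [:: 1]).
block (14 * m) (14 * m).+1 (phi 3 [:: 0]); block (14 * m).+1 (16 * m) (phi 3 [:: 1]).
rewrite big_geq // addn0 !addnA; repeat congr (_ + _).
all: by [congr (_ * _); lia | rewrite -[RHS]mul1n; congr (_ * _); lia].
Qed.

Definition ord_label i : 'I_N -> 'I_4 := fun v => inord (label i v).
Definition ord_outset : 'I_N -> pred 'I_4 := fun u t => nat_of_ord t \in outset u.
Definition family i : rel 'I_N := lab_digraph (ord_label i) ord_outset.
Definition neg_label : pred 'I_4 := fun t => t == 3 :> nat.
Definition family_sign i : signing N := fun _ v => neg_label (ord_label i v).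

Lemma ord_labelE i v : ord_label i v = label i v :> nat.
Proof. exact: inordK (label_lt4 _ _). Qed.

Lemma ord_label_eq i v (t : 'I_4) : (ord_label i v == t) = (label i v == t).
Proof. by rewrite -val_eqE /= ord_labelE. Qed.

Lemma familyE i u v : family i u v = (label i v \in outset u).
Proof. by rewrite /family /lab_digraph /ord_outset ord_labelE. Qed.

Ltac arc_check := rewrite /= ?familyE /label /outset /=; case_ifs => //=; rewrite ?inE; lia.
Ltac path_check := rewrite /= ?andbT; repeat (apply/andP; split); arc_check.

Lemma family_irreflexive i : is_digraph (family i).
Proof. move=> v; arc_check. Qed.

Lemma family_strongly_connected i : i < 4 * m -> strongly_connected (family i).
Proof.
move=> lt_i4m.
have [lt_a0 lt_b1 lt_x2 lt_y2 lt_x3] :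
  [/\ 4 * m < N, 4 * m - 1 < N, 12 * m < N, (12 * m).+1 < N & 14 * m < N] by split; lia.
pose a0 := Ordinal lt_a0; pose b1 := Ordinal lt_b1; pose x2 := Ordinal lt_x2.
pose y2 := Ordinal lt_y2; pose x3 := Ordinal lt_x3.
(* a0, b1 have labels 0, 1; x2, y2 have label 2 and x3 label 3, with out-sets
   {0} for x2, x3 and {1} for y2. *)
have to_x2 u : connect (family i) u x2.
  have lt_u : u < 16 * m by rewrite -N16m.
  case: (ltnP u (8 * m)) => [|le8].
    by move=> ?; apply/connectP; exists [:: x2] => //; path_check.
  case: (ltnP u (12 * m)) => [|le12].
    by move=> ?; apply/connectP; exists [:: x3; a0; x2] => //; path_check.
  case: (boolP ((u == 12 * m :> nat) || (u == 14 * m :> nat))) => ?.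
    by apply/connectP; exists [:: a0; x2] => //; path_check.
  by apply/connectP; exists [:: b1; x2] => //; path_check.
have from_x2 v : connect (family i) x2 v.
  have : label i v < 4 := label_lt4 i v.
  case lab_v: (label i v) => [|[|[|[|//]]]] _; apply/connectP.
  - by exists [:: v] => //; rewrite /= !familyE lab_v; path_check.
  - by exists [:: a0; y2; v] => //; rewrite /= !familyE lab_v; path_check.
  - by exists [:: a0; v] => //; rewrite /= !familyE lab_v; path_check.
  - by exists [:: a0; y2; b1; v] => //; rewrite /= !familyE lab_v; path_check.
by move=> u v; apply: connect_trans (to_x2 u) (from_x2 v).
Qed.

Lemma family_not_symmetric i : i < 4 * m -> ~ symmetric_digraph (family i).
Proof.
move=> lt_i4m symmetric.
have [lt_a0 lt_y2] : 4 * m < N /\ (12 * m).+1 < N by split; lia.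
have arc : family i (Ordinal lt_a0) (Ordinal lt_y2) by arc_check.
by apply/negP: (symmetric _ _ arc); arc_check.
Qed.

Lemma family_not_cycle_balanced i : i < 4 * m ->
  ~ cycle_balanced (family i) (family_sign i).
Proof.
move=> lt_i4m balanced.
have [lt_a0 lt_b1 lt_y2 lt_x3] :
  [/\ 4 * m < N, 4 * m - 1 < N, (12 * m).+1 < N & 14 * m < N] by split; lia.
pose c := [:: Ordinal lt_b1; Ordinal lt_x3; Ordinal lt_a0; Ordinal lt_y2].
have c_cycle : directed_cycle (family i) c.
  apply/and3P; split=> //; last by path_check.
  by rewrite /= !inE -!val_eqE /=; lia.
have := balanced c c_cycle.
rewrite /cycle_sign /= !big_cons big_nil /family_sign /neg_label !ord_labelE /=.
have [-> -> -> ->] : [/\ label i (4 * m - 1) = 1, label i (14 * m) = 3,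
  label i (4 * m) = 0 & label i (12 * m).+1 = 2] by rewrite /label; split; case_ifs; lia.
rewrite /Defs.sgval expr1 !expr0 !mulr1 => /eqP.
by rewrite -subr_eq0 -opprD -mulr2n oppr_eq0 pnatr_eq0.
Qed.

Definition label_indegree (t : nat) : nat :=
  (t == 0) * 2 + (t == 1) * (4 * m - 2) + ((t == 2) + (t == 3)) * (8 * m).

Lemma sum_outset_mem t : \sum_(u < N) (t \in outset u) = label_indegree t.
Proof. by rewrite (@sum_vertices 0 (fun _ s => (t \in s) : nat)) // /label_indegree !inE; lia. Qed.

Lemma arcs_family i : i <= 4 * m ->
  arcs (family i) = (4 * m - 4) * i + 48 * m * m + 8 * m.
Proof.
move=> le_i4m; rewrite /arcs exchange_big /=.
under eq_bigr => v _ do under eq_bigr => u _ do rewrite familyE.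
under eq_bigr => v _ do rewrite sum_outset_mem.
by rewrite (@sum_vertices i (fun g _ => label_indegree g)) // /label_indegree /=; nia.
Qed.

Lemma family_not_isomorphic i j : 1 < m -> i <= 4 * m -> j <= 4 * m -> i != j ->
  ~ isomorphic (family i) (family j).
Proof.
move=> lt1m le_i4m le_j4m neq_ij /isomorphic_arcs; rewrite !arcs_family // -!addnA.
move=> /addIn/eqP; rewrite eqn_mul2l (negbTE neq_ij) orbF; lia.
Qed.

Local Open Scope ring_scope.

(* The entry (t, t') of [lab_mx *m out_mx] counts the vertices of label t whose
   out-set contains t'; the rows are (0, 0, 4m, 4m) for t < 2 and
   (1, 2m - 1, 0, 0) for t >= 2, whatever i is. *)
Definition Pmx : 'M[algC]_(4, 2) := \matrix_(t, a) ((t < 2)%N == (a == 0 :> nat))%:R.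
Definition Qmx : 'M[algC]_(2, 4) := \matrix_(a, t)
  (if a == 0 :> nat then (if (2 <= t)%N then 4 * m else 0)
   else if t == 0 :> nat then 1 else if t == 1 :> nat then 2 * m - 1 else 0)%N%:R.

Lemma lab_mx_out_mx_family i : (i <= 4 * m)%N ->
  lab_mx (ord_label i) *m out_mx ord_outset = Pmx *m Qmx.
Proof.
move=> le_i4m; apply/matrixP => t t'; rewrite lab_mx_out_mxE.
under eq_bigr do rewrite ord_label_eq.
rewrite (sum_vertices (fun g s => (g == t) && (nat_of_ord t' \in s))) //.
rewrite !mxE !big_ord_recr big_ord0 /= !mxE /= add0r -!natrM -natrD; congr (_%:R).
by case: t => [[|[|[|[|//]]]] ?]; case: t' => [[|[|[|[|//]]]] ?] /=; lia.
Qed.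

Lemma QPmx_sqr : Qmx *m Pmx *m (Qmx *m Pmx) = ((4 * m)%:R ^+ 2 : algC)%:M.
Proof.
have e1 : ((2 * m - 1)%:R : algC) = 2%:R * m%:R - 1 by rewrite natrB ?natrM //; lia.
apply/matrixP => a b; rewrite !mxE !big_ord_recr big_ord0 /= !mxE.
rewrite !big_ord_recr !big_ord0 /= !mxE /=.
by case: a => [[|[|//]] ?]; case: b => [[|[|//]] ?] /=;
  rewrite ?mulr0n ?mulr1n e1 natrM; ring.
Qed.

Lemma QsignPmx_sqr :
  Qmx *m (sign_mx neg_label *m Pmx) *m (Qmx *m (sign_mx neg_label *m Pmx))
  = (0 ^+ 2)%:M.
Proof.
apply/matrixP => a b; rewrite !mxE !big_ord_recr big_ord0 /= !mxE.
rewrite !big_ord_recr !big_ord0 /= !mul_diag_mx !mxE /=.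
by case: a => [[|[|//]] ?]; case: b => [[|[|//]] ?] /=; rewrite /Defs.sgval ?expr0n /=; ring.
Qed.

Lemma family_integral_strongly_quasi_cospectral i j :
  (i < 4 * m)%N -> (j < 4 * m)%N ->
  integral_strongly_quasi_cospectral (family i) (family j).
Proof.
move=> lt_i4m lt_j4m; have le4N : (4 <= N)%N by lia.
have RS k : (k < 4 * m)%N -> lab_mx (ord_label k) *m out_mx ord_outset = Pmx *m Qmx.
  by move=> lt_k4m; apply: lab_mx_out_mx_family; lia.
have sRS k : (k < 4 * m)%N ->
    sign_mx neg_label *m lab_mx (ord_label k) *m out_mx ord_outset
    = (sign_mx neg_label *m Pmx) *m Qmx.
  by move=> /RS RSk; rewrite -!mulmxA RSk.
have adjE k : adj (family k) = out_mx ord_outset *m lab_mx (ord_label k).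
  exact: adj_lab_digraph.
have sadjE k : sadj (family k) (family_sign k)
    = out_mx ord_outset *m (sign_mx neg_label *m lab_mx (ord_label k)).
  exact: sadj_lab_digraph.
have int_adj k : (k < 4 * m)%N -> integral_spectrum (adj (family k)).
  move=> /RS RSk; rewrite adjE; apply: integral_spectrum_mulmxC => //.
  by rewrite RSk; apply: integral_spectrum_factor QPmx_sqr; exact: natr_int.
have int_sadj k : (k < 4 * m)%N -> integral_spectrum (sadj (family k) (family_sign k)).
  move=> /sRS sRSk; rewrite sadjE; apply: integral_spectrum_mulmxC => //.
  by rewrite sRSk; apply: integral_spectrum_factor QsignPmx_sqr; exact: rpred0.
split; [| exact: int_adj.. | exists (family_sign i), (family_sign j); split].
- by rewrite !adjE; apply: cospectral_mulmxC; rewrite ?RS.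
- exact: family_not_cycle_balanced.
- exact: family_not_cycle_balanced.
- by rewrite !sadjE; apply: cospectral_mulmxC; rewrite ?sRS.
- exact: int_sadj.
- exact: int_sadj.
Qed.

End Family.

Theorem theorem2p15 (n : nat) : (4 <= n)%N ->
  exists D : 'I_n -> rel 'I_(4 ^ n),
    (forall i, [/\ is_digraph (D i), strongly_connected (D i)
                 & ~ symmetric_digraph (D i)]) /\
    (forall i j, i != j ->
       ~ isomorphic (D i) (D j) /\ integral_strongly_quasi_cospectral (D i) (D j)).
Proof.
move=> le4n; set m := 4 ^ (n - 2).
have N16m : 4 ^ n = 16 * m by rewrite /m -[16]/(4 ^ 2) -expnD subnKC //; lia.
have lt_n2m : n - 2 < m := ltn_expl _ (isT : 1 < 4).
have [m_gt0 lt1m] : 0 < m /\ 1 < m by split; lia.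
have lt_i4m (i : 'I_n) : i < 4 * m by have := ltn_ord i; lia.
exists (fun i => family m i); split => [i | i j neq_ij]; first split.
- exact: family_irreflexive.
- exact: family_strongly_connected.
- exact: family_not_symmetric.
split; first by apply: family_not_isomorphic => //; apply: ltnW.
exact: family_integral_strongly_quasi_cospectral.
Qed.
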